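(* Let $f,g\in\ell_1(\mathbb{Z})$ and $\delta,\kappa>0$. Let $I\subset\mathbb{Z}$ be an integer interval and $I=I_1\cup I_2\cup I_3$ a partition of $I$ into three subsets (not necessarily intervals) such that $|I_3|\in[\delta|I|/2,\delta|I|]$, $|I_2|\leq\delta|I|$, and $f(t_1)\geq\kappa+f(t_3)$ for all $t_1\in I_1$, $t_3\in I_3$. Let $X$ be an integer random variable uniformly distributed on an integer interval $J\subset\mathbb{Z}$ of cardinality at least $|I|$. Then $$\mathbb{P}\big\{|\{t\in I:\ |f(t)-g(t+X)|\geq\kappa/2\}|<\delta|I|/4\big\}\leq 64\delta.$$ *)

From mathcomp Require Import all_boot all_order all_algebra.
From mathcomp Require Import all_classical all_reals esum.
Set Implicit Arguments. Unset Strict Implicit. Unset Printing Implicit Defensive.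
Import Order.TTheory GRing.Theory Num.Theory.
Local Open Scope ring_scope.

Definition zinterval (a : int) (n : nat) : seq int :=
  [seq a + (i%:Z) | i <- iota 0 n].

Definition ell1 (R : realType) (f : int -> R) : Prop :=
  summable [set: int] (fun k => (f k)%:E).

Definition cardin (R : realType) (A : pred int) (s : seq int) : R :=
  (count A s)%:R.

Definition unif_prob (R : realType) (a : int) (m : nat) (E : pred int) : R :=
  (count E (zinterval a m))%:R / m%:R.

From mathcomp Require Import all_boot all_order all_algebra.
From mathcomp Require Import all_classical all_reals esum.
From mathcomp Require Import zify lra.
Import Order.TTheory GRing.Theory Num.Theory.
Local Open Scope ring_scope.

(* Call a shift x good if |f t - g (t + x)| < kappa/2 at all but fewer than
   delta|I|/4 points t of I, and call s low if g s < f t3 + kappa/2 for some t3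
   in I3.  For a good x, more than delta|I|/4 points of I3 + x are low, since a
   point t of I3 with g (t + x) close to f t is its own witness.  For a good y,
   fewer than 9 delta|I|/4 points of I + y are low: f exceeds f(I3) by kappa on
   I1, so a low point over I1 is a mismatch, while I2, I3 and the mismatches
   are small.  In a window of |I| consecutive shifts, all good shifts lie
   between the extreme good shifts xmin and xmax, so the translates t + x of a
   point t lie in (I + xmin) u (I + xmax); counting the low translates of the
   points of I3 in two ways leaves at most 18 delta|I| good shifts per window.
   Finally J is covered by |J|/|I| + 1 <= 2|J|/|I| windows. *)

Lemma mem_zinterval (a s : int) (n : nat) :
  (s \in zinterval a n) = (a <= s < a + n%:Z).
Proof.
apply/mapP/andP => [[i /[!mem_iota] /andP[_ i_lt] ->]|[a_le s_lt]].
  by rewrite lerDl ltrD2l ltz_nat.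
exists `|s - a|%N; last by rewrite gez0_abs ?subr_ge0 // subrKC.
by rewrite mem_iota /= -ltz_nat gez0_abs ?subr_ge0 // ltrBlDl.
Qed.

Lemma zintervalD (a : int) (p q : nat) :
  zinterval a (p + q) = zinterval a p ++ zinterval (a + p%:Z) q.
Proof.
rewrite /zinterval iotaD map_cat add0n -[in iota p _](addn0 p) iotaDl -map_comp.
by congr (_ ++ _); apply: eq_map => i /=; rewrite PoszD addrA.
Qed.

Lemma zinterval_shift (a y : int) (n : nat) :
  zinterval (a + y) n = map (+%R^~ y) (zinterval a n).
Proof.
by rewrite /zinterval -map_comp; apply: eq_map => i /=; rewrite addrAC.
Qed.

Lemma zinterval_uniq (a : int) (n : nat) : uniq (zinterval a n).
Proof. by rewrite map_inj_uniq ?iota_uniq // => i j /addrI []. Qed.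

Lemma sub_in_count (T : eqType) (s : seq T) (P Q : pred T) :
  {in s, subpred P Q} -> (count P s <= count Q s)%N.
Proof.
elim: s => //= x s IHs sPQ; apply: leq_add.
  by case Px: (P x); rewrite // sPQ ?mem_head.
by apply: IHs => y sy; apply: sPQ; rewrite inE sy orbT.
Qed.

Lemma leq_count_predU (T : eqType) (s : seq T) (P Q : pred T) :
  (count (predU P Q) s <= count P s + count Q s)%N.
Proof. by rewrite -count_predUI leq_addr. Qed.

Lemma exchange_sum_count (I J : Type) (r : seq I) (s : seq J)
    (P : pred I) (Q : I -> pred J) :
  (\sum_(i <- r | P i) count (Q i) s =
   \sum_(j <- s) count (fun i => P i && Q i j) r)%N.
Proof.
under eq_bigr do rewrite -sum1_count.
by rewrite (exchange_big_dep predT) //; under eq_bigr do rewrite sum1_count.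
Qed.

Local Open Scope order_scope.

Lemma seq_has_min [d] [T : orderType d] [s : seq T] :
  s != [::] -> exists2 x, x \in s & {in s, forall y, x <= y}.
Proof.
elim: s => // x [|y s] IHs _.
  by exists x; rewrite ?mem_head // => z /[!inE] /eqP->.
have [z zs z_min] := IHs isT.
have [xz|zx] := leP x z.
- exists x; first exact: mem_head.
  by move=> u /[!inE] /predU1P[->//|/z_min]; apply: le_trans.
- exists z; first by rewrite inE zs orbT.
  by move=> u /[!inE] /predU1P[->|/z_min//]; apply: ltW.
Qed.

Lemma seq_has_max [d] [T : orderType d] [s : seq T] :
  s != [::] -> exists2 x, x \in s & {in s, forall y, y <= x}.
Proof. exact: (@seq_has_min _ T^d s). Qed.

Local Close Scope order_scope.

Lemma count_translates_le (P Q : pred int) (K : seq int) (c t y1 y2 : int)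
    (n : nat) :
  uniq K -> t \in zinterval c n -> {in K, forall x, P x -> y1 <= x <= y2} ->
  y2 <= y1 + n%:Z ->
  (count (fun x => P x && Q (t + x)%R) K <=
   count Q (zinterval (c + y1)%R n) + count Q (zinterval (c + y2)%R n))%N.
Proof.
move=> K_uniq It K_bounds y12.
rewrite -count_cat -!size_filter -(size_map (+%R t)).
apply: uniq_leq_size.
  by rewrite map_inj_uniq ?filter_uniq //; apply: addrI.
move=> _ /mapP[x /[!mem_filter] /andP[/andP[Px Qtx] Kx] ->].
rewrite Qtx mem_cat !mem_zinterval /=.
by move: It (K_bounds x Kx Px); rewrite mem_zinterval; lia.
Qed.

Lemma count_zinterval_windows [R : numDomainType] [P : pred int] (a : int)
    (m : nat) [n : nat] [B : R] :
  (0 < n)%N -> (forall b, (count P (zinterval b n))%:R <= B) ->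
  (count P (zinterval a m))%:R <= (m %/ n).+1%:R * B.
Proof.
move=> n_gt0 window_le.
have blocks_le k b : (count P (zinterval b (k * n)))%:R <= k%:R * B.
  elim: k b => [|k IHk] b; first by rewrite mul0r.
  rewrite mulSn zintervalD count_cat natrD -[k.+1]addn1 natrD mulrDl mul1r.
  by rewrite addrC; apply: lerD.
apply: le_trans (blocks_le _ a).
have /ltnW/subnKC<- := ltn_ceil m n_gt0.
by rewrite zintervalD count_cat ler_nat leq_addr.
Qed.

Section GoodShifts.

Local Set Implicit Arguments.
Local Unset Strict Implicit.

Variables (R : realType) (f g : int -> R) (kappa D : R) (c : int) (n : nat).
Variables I1 I2 I3 : pred int.

Let I := zinterval c n.

Hypothesis I_cover : {in I, forall t, I1 t || I2 t || I3 t}.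
Hypothesis I2_small : (count I2 I)%:R <= D.
Hypothesis I3_large : D / 2 <= (count I3 I)%:R.
Hypothesis I3_small : (count I3 I)%:R <= D.
Hypothesis f_gap : forall t1 t3, I1 t1 -> I3 t3 -> kappa + f t3 <= f t1.

Definition mismatch (x t : int) : bool := kappa / 2 <= `|f t - g (t + x)|.

Definition good_shift (x : int) : bool := (count (mismatch x) I)%:R < D / 4.

Definition low (s : int) : bool :=
  has (fun t3 => g s < f t3 + kappa / 2) (seq.filter I3 I).

Lemma low_of_match [x t : int] :
  t \in seq.filter I3 I -> ~~ mismatch x t -> low (t + x).
Proof.
move=> t_I3 /negbTE; rewrite /mismatch leNgt => /negbFE.
by rewrite ltr_norml => /andP[lt_t _]; apply/hasP; exists t => //; lra.
Qed.

Lemma mismatch_of_low [x t : int] : I1 t -> low (t + x) -> mismatch x t.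
Proof.
move=> I1t /hasP[t3 /[!mem_filter] /andP[I3t3 _] g_lt].
have := f_gap I1t I3t3; rewrite /mismatch; apply: contraLR; rewrite -ltNge.
by rewrite ltr_norml => /andP[_ ?]; lra.
Qed.

Lemma good_shift_many_low [x : int] :
  good_shift x -> D / 4 < (count (fun t => low (t + x)) (seq.filter I3 I))%:R.
Proof.
rewrite /good_shift => good_x.
have mismatch_I3 := leq_count_subseq (mismatch x) (filter_subseq I3 I).
have : (count I3 I <= count (fun t => low (t + x)) (seq.filter I3 I)
                      + count (mismatch x) (seq.filter I3 I))%N.
  rewrite -size_filter -count_predT.
  apply: (leq_trans _ (leq_count_predU _ _ _ _)).
  apply: sub_in_count => t t_I3 _ /=.
  by case: (boolP (mismatch x t)) => [|/(low_of_match t_I3)->]; rewrite ?orbT.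
by have := I3_large; rewrite -!(ler_nat R) natrD in mismatch_I3 *; lra.
Qed.

Lemma good_shift_few_low [y : int] :
  good_shift y -> (count (fun t => low (t + y)) I)%:R < 9 / 4 * D.
Proof.
rewrite /good_shift => good_y.
have : (count (fun t => low (t + y)) I
        <= count I2 I + (count I3 I + count (mismatch y) I))%N.
  apply: (leq_trans (@sub_in_count _ _ _ (predU I2 (predU I3 (mismatch y))) _)).
    move=> t /I_cover + low_t /=.
    by case/orP=> [/orP[/mismatch_of_low/(_ low_t)|]|] ->; rewrite ?orbT.
  apply: leq_trans (leq_count_predU _ _ _ _) _.
  by rewrite leq_add2l leq_count_predU.
by have := I2_small; have := I3_small; rewrite -(ler_nat R) !natrD; lra.
Qed.

Lemma sum_low_translates_le [b xmin xmax : int] :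
  xmin \in zinterval b n -> xmax \in zinterval b n ->
  {in zinterval b n, forall x, good_shift x -> xmin <= x <= xmax} ->
  (\sum_(x <- zinterval b n | good_shift x)
      count (fun t => low (t + x)) (seq.filter I3 I)
   <= count I3 I * (count (fun t => low (t + xmin)) I
                    + count (fun t => low (t + xmax)) I))%N.
Proof.
move=> xmin_in xmax_in shifts_bounded.
rewrite exchange_sum_count -size_filter -sum1_size big_distrl /=.
rewrite big_seq [X in (_ <= X)%N]big_seq; apply: leq_sum => t /[!mem_filter].
case/andP=> _ It; rewrite mul1n -!(count_map (+%R^~ _) low) -!zinterval_shift.
apply: count_translates_le It shifts_bounded _; first exact: zinterval_uniq.
by move: xmin_in xmax_in; rewrite !mem_zinterval; lia.
Qed.

Lemma good_shifts_window (b : int) :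
  (count good_shift (zinterval b n))%:R <= 18 * D.
Proof.
have [->|count_gt0] := posnP (count good_shift (zinterval b n)).
  by have := I3_large; have := I3_small; lra.
have has_good : seq.filter good_shift (zinterval b n) != [::].
  by rewrite -size_eq0 size_filter -lt0n.
have [xmin /[!mem_filter] /andP[good_min xmin_in] xmin_le] :=
  seq_has_min has_good.
have [xmax /[!mem_filter] /andP[good_max xmax_in] le_xmax] :=
  seq_has_max has_good.
have shifts_bounded :
    {in zinterval b n, forall x, good_shift x -> xmin <= x <= xmax}.
  by move=> x Kx good_x; rewrite xmin_le ?le_xmax // mem_filter good_x Kx.
have D_gt0 : 0 < D.
  have := ler0n R (count (mismatch xmin) I).
  by move: good_min; rewrite /good_shift; lra.
rewrite -(ler_pM2r (_ : 0 < D / 4)) ?divr_gt0 //.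
apply: le_trans (_ : _ <= (\sum_(x <- zinterval b n | good_shift x)
                  count (fun t => low (t + x)) (seq.filter I3 I))%:R) _.
  rewrite natr_sum mulr_natl -iter_addr_0 -big_const_seq.
  by apply: ler_sum => x /good_shift_many_low/ltW.
have := sum_low_translates_le xmin_in xmax_in shifts_bounded.
rewrite -(ler_nat R) => /le_trans; apply.
apply: le_trans (_ : _ <= D * (9 / 2 * D)) _; last lra.
have := good_shift_few_low good_min; have := good_shift_few_low good_max.
rewrite natrM natrD => a2_lt a1_lt.
by apply: ler_pM; rewrite ?addr_ge0 ?ler0n //; lra.
Qed.

End GoodShifts.

Theorem lemma4p8 (R : realType) (f g : int -> R) (delta kappa : R)
  (c : int) (n : nat) (I1 I2 I3 : pred int) (a : int) (m : nat) :
  ell1 f -> ell1 g -> 0 < delta -> 0 < kappa ->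
  (* I = zinterval c n is partitioned into I1, I2, I3 *)
  (forall t, I1 t || I2 t || I3 t -> t \in zinterval c n) ->
  (forall t, t \in zinterval c n -> I1 t || I2 t || I3 t) ->
  (forall t, ~~ (I1 t && I2 t)) -> (forall t, ~~ (I1 t && I3 t)) ->
  (forall t, ~~ (I2 t && I3 t)) ->
  delta * n%:R / 2 <= cardin R I3 (zinterval c n) <= delta * n%:R ->
  cardin R I2 (zinterval c n) <= delta * n%:R ->
  (forall t1 t3, I1 t1 -> I3 t3 -> kappa + f t3 <= f t1) ->
  (* X uniform on J = zinterval a m, nonempty, with |J| >= |I| *)
  (0 < m)%N -> (n <= m)%N ->
  unif_prob R a m
    (fun x => cardin R (fun t => kappa / 2 <= `|f t - g (t + x)|) (zinterval c n)
              < delta * n%:R / 4)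
  <= 64 * delta.
Proof.
move=> _ _ delta_gt0 _ _ I_cover _ _ _ /andP[I3_large I3_small] I2_small f_gap.
move=> m_gt0 n_le_m; rewrite /unif_prob ler_pdivrMr ?ltr0n //.
have [n0|n_gt0] := posnP n.
  rewrite n0 (@eq_count _ _ pred0) ?count_pred0 => [|x]; last first.
    by rewrite /= mulr0 mul0r ltxx.
  by rewrite !mulr_ge0 ?ler0n // ltW.
have window_le := good_shifts_window g I_cover I2_small I3_large I3_small f_gap.
apply: (le_trans (count_zinterval_windows a m n_gt0 window_le)).
have : ((m %/ n).+1 * n <= m + m)%N by rewrite mulSnr leq_add ?leq_divM.
rewrite -(ler_nat R) natrM natrD; have := ler0n R m; nra.
Qed.
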